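(* Let $\alpha>0$, $\ell>0$, $p\in\mathbb{N}$, and set $a=\frac{1}{1+\alpha}\in(0,1)$, $\theta=\frac{\ell}{1+\alpha}>0$. For every $N\ge1$, the random partition of $\{1,\dots,N\}$ produced at time $N$ by the Chinese restaurant process with competition with parameters $a,\theta,p$ has the same law as the branch partition of $\{1,\dots,N\}$ of the modified GPORT with immigration $\mathcal{T}_{\alpha,\ell}$ with period $p$ after $N$ insertions. (Indeed the two sequences of partitions, indexed by $N$, have the same law.)
   Context: Chinese restaurant process with competition (parameters $0<a<1$, $\theta>0$, $p\in\mathbb{N}$): at time $1$ the partition is $\{\{1\}\}$. For $N\ge1$ write $N=np+k$, $0\le k<p$, and $c_N=N+(n+1)\theta$. Given a partition of $\{1,\dots,N\}$ with $m$ blocks $t_1,\dots,t_m$, element $N+1$ joins block $t_i$ with probability $(|t_i|-a)/c_N$ and forms a new singleton block with probability $((n+1)\theta+ma)/c_N$. Modified GPORT with immigration $\mathcal{T}_{\alpha,\ell}$: at time $0$ there is a single root labelled $0$. At time $N$ the forest has ordinary nodes $1,\dots,N$, the root $0$, and $\lfloor N/p\rfloor$ immigrant roots. Node $N+1$ attaches to an ordinary node $v$ with probability $(d(v)+\alpha)/C_N$ and to a root $v$ (root $0$ or an immigrant root) with probability $(d(v)+\ell)/C_N$, where $d(v)$ is the out-degree and $C_N=(1+\alpha)N+(\lfloor N/p\rfloor+1)\ell$; after node $N+1$ is attached, if $p\mid(N+1)$ a new isolated immigrant root is added. The branch partition of $\{1,\dots,N\}$ has as blocks the label sets of the subtrees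 rooted at the children of the roots. *)

From HB Require Import structures.
From mathcomp Require Import all_boot all_order all_algebra.
Set Implicit Arguments. Unset Strict Implicit. Unset Printing Implicit Defensive.
Import Order.TTheory GRing.Theory Num.Theory.
Local Open Scope ring_scope.

(* Finitely supported laws are represented as lists of (weight, history)
   pairs; a history is the full sequence of random choices made so far, so the
   state of the process at time k is the prefix of length k of the history. *)

(* ---------- Partitions of {1,...,n} ----------
   Element x : 'I_n represents the integer x+1.  Given a "key" function on
   {1,...,n}, the partition whose blocks are the level sets of the key. *)
Definition part_of_key (n : nat) (key : nat -> nat) : {set {set 'I_n}} :=
  [set [set y : 'I_n | key y.+1 == key x.+1] | x : 'I_n].

(* ---------- Chinese restaurant process with competition ----------
   History s : seq nat; s`_(i-1) is the index of the block containing i,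
   blocks being numbered 0,1,2,... in order of creation. *)
Definition nblocks (s : seq nat) : nat := size (undup s).

(* probability that element N+1 makes choice c, given the history s of
   length N (c < nblocks s : join block c ; c = nblocks s : new block) *)
Definition crp_prob (R : realFieldType) (a theta : R) (p N : nat)
    (s : seq nat) (c : nat) : R :=
  let n := (N %/ p)%N in
  let cN := N%:R + (n + 1)%:R * theta in
  if (c < nblocks s)%N then ((count_mem c s)%:R - a) / cN
  else ((n + 1)%:R * theta + (nblocks s)%:R * a) / cN.

Definition crp_step (R : realFieldType) (a theta : R) (p N : nat)
    (l : seq (R * seq nat)) : seq (R * seq nat) :=
  flatten [seq [seq (x.1 * crp_prob a theta p N x.2 c, rcons x.2 c)
               | c <- iota 0 (nblocks x.2).+1] | x <- l].

(* law of the history at time N (meaningful for N >= 1) *)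
Fixpoint crp_dist (R : realFieldType) (a theta : R) (p N : nat)
    : seq (R * seq nat) :=
  match N with
  | 0 => [:: (1, [::])]
  | 1 => [:: (1, [:: 0%N])]
  | S (S _ as M) => crp_step a theta p M (crp_dist a theta p M)
  end.

Definition crp_key (s : seq nat) (i : nat) : nat := nth 0%N s i.-1.

Definition crp_part (k : nat) (s : seq nat) : {set {set 'I_k}} :=
  part_of_key k (crp_key (take k s)).

(* ---------- Modified GPORT with immigration ----------
   Vertices: inl j = root j (j = 0 is the root 0, j >= 1 immigrant roots),
             inr i = ordinary node i (i >= 1).
   History par : seq (nat + nat); par`_(i-1) is the vertex node i attached to. *)
Definition vertex := (nat + nat)%type.

(* vertices present at time N (before attaching node N+1) *)
Definition vertices (p N : nat) : seq vertex :=
  [seq inl j | j <- iota 0 (N %/ p).+1] ++ [seq inr i | i <- iota 1 N].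

Definition gport_prob (R : realFieldType) (alpha ell : R) (p N : nat)
    (par : seq vertex) (v : vertex) : R :=
  let CN := (1 + alpha) * N%:R + ((N %/ p)%N + 1)%:R * ell in
  let d := count_mem v par in
  match v with
  | inl _ => (d%:R + ell) / CN
  | inr _ => (d%:R + alpha) / CN
  end.

Definition gport_step (R : realFieldType) (alpha ell : R) (p N : nat)
    (l : seq (R * seq vertex)) : seq (R * seq vertex) :=
  flatten [seq [seq (x.1 * gport_prob alpha ell p N x.2 v, rcons x.2 v)
               | v <- vertices p N] | x <- l].

Fixpoint gport_dist (R : realFieldType) (alpha ell : R) (p N : nat)
    : seq (R * seq vertex) :=
  match N with
  | 0 => [:: (1, [::])]
  | M.+1 => gport_step alpha ell p M (gport_dist alpha ell p M)
  end.

Fixpoint branch_top (fuel : nat) (par : seq vertex) (i : nat) : nat :=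
  match fuel with
  | 0 => i
  | f.+1 => match nth (inl 0%N) par i.-1 with
            | inl _ => i
            | inr j => branch_top f par j
            end
  end.

Definition gport_key (par : seq vertex) (i : nat) : nat := branch_top i par i.

Definition gport_part (k : nat) (par : seq vertex) : {set {set 'I_k}} :=
  part_of_key k (gport_key (take k par)).

Definition crp_law (R : realFieldType) (a theta : R) (p N : nat)
    (P : {set {set 'I_N}}) : R :=
  \sum_(x <- crp_dist a theta p N) x.1 * (crp_part N x.2 == P)%:R.

Definition gport_law (R : realFieldType) (alpha ell : R) (p N : nat)
    (P : {set {set 'I_N}}) : R :=
  \sum_(x <- gport_dist alpha ell p N) x.1 * (gport_part N x.2 == P)%:R.

Definition crp_path_law (R : realFieldType) (a theta : R) (p N : nat)
    (rho : forall k : 'I_N, {set {set 'I_k.+1}}) : R :=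
  \sum_(x <- crp_dist a theta p N)
     x.1 * [forall k : 'I_N, crp_part k.+1 x.2 == rho k]%:R.

Definition gport_path_law (R : realFieldType) (alpha ell : R) (p N : nat)
    (rho : forall k : 'I_N, {set {set 'I_k.+1}}) : R :=
  \sum_(x <- gport_dist alpha ell p N)
     x.1 * [forall k : 'I_N, gport_part k.+1 x.2 == rho k]%:R.

Arguments crp_law {R} a theta p N P.
Arguments gport_law {R} alpha ell p N P.
Arguments crp_path_law {R} a theta p N rho.
Arguments gport_path_law {R} alpha ell p N rho.

From HB Require Import structures.
From mathcomp Require Import all_boot all_order all_algebra.
From mathcomp Require Import ring zify.
Import Order.TTheory GRing.Theory Num.Theory.
Local Open Scope ring_scope.
Set Implicit Arguments. Unset Strict Implicit. Unset Printing Implicit Defensive.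

(* Map a GPORT history to a CRP history ([block_history]): a node attached to
   a root opens a new table, a node attached to node j sits at the table of j.
   The tables are then the branches of the forest, since every node shares the
   table of its branch top and distinct root children open distinct tables.
   The map also lumps the GPORT transition onto the CRP one: a table of size k
   has k - 1 members attached to its other members, so its members have total
   weight (k - 1) + k alpha = (1 + alpha) (k - a), while the roots have total
   weight m + (n + 1) ell = (1 + alpha) ((n + 1) theta + m a) when there are m
   tables; as C_N = (1 + alpha) c_N, the probabilities agree. *)

Section BigSeq.
Variables (R : Type) (idx : R) (op : Monoid.com_law idx).

Lemma big_pred1_seq (I : eqType) (r : seq I) (x : I) (F : I -> R) :
  uniq r -> x \in r -> \big[op/idx]_(i <- r | x == i) F i = F x.
Proof.
move=> ur xr; rewrite -big_filter (eq_filter (a2 := pred1 x)); last by move=> i; exact: eq_sym.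
by rewrite filter_pred1_uniq // big_seq1.
Qed.

Lemma partition_big_seq (I J : eqType) (r : seq I) (s : seq J) (h : I -> J) (F : I -> R) :
  uniq s -> {in r, forall i, h i \in s} ->
  \big[op/idx]_(i <- r) F i = \big[op/idx]_(j <- s) \big[op/idx]_(i <- r | h i == j) F i.
Proof.
move=> us hrs; rewrite (exchange_big_dep predT) //=.
by apply: eq_big_seq => i ri; rewrite big_pred1_seq // hrs.
Qed.

End BigSeq.

Lemma sum_count_mem (T : eqType) (r s : seq T) (P : pred T) : uniq r ->
  (\sum_(x <- r | P x) count_mem x s)%N = count (fun y => P y && (y \in r)) s.
Proof.
move=> ur; elim: s => [|y s IH] /=; first by rewrite big1.
rewrite big_split /= IH; congr (_ + _)%N.
rewrite -big_mkcondr sum1_count.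
have eqy x : P x && (y == x) = P y && (x == y) by rewrite eq_sym; case: eqP => [->|_]; rewrite ?andbF.
case: (P y) in eqy *.
  by rewrite (eq_count (a2 := pred1 y)) ?count_uniq_mem.
by rewrite (eq_count (a2 := pred0)) ?count_pred0.
Qed.

Lemma sum_flatten_step (R : pzSemiRingType) (A : Type) (V : seq A -> seq A)
    (P : seq A -> A -> R) (l : seq (R * seq A)) (g : seq A -> R) :
  \sum_(y <- flatten [seq [seq (x.1 * P x.2 v, rcons x.2 v) | v <- V x.2] | x <- l])
     y.1 * g y.2 =
  \sum_(x <- l) x.1 * \sum_(v <- V x.2) P x.2 v * g (rcons x.2 v).
Proof.
rewrite big_flatten big_map; apply: eq_bigr => x _.
by rewrite big_map big_distrr; apply: eq_bigr => v _; rewrite /= mulrA.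
Qed.

Definition is_root (v : vertex) : bool := if v is inl _ then true else false.

Definition vertex_block (s : seq nat) (v : vertex) : nat :=
  if v is inr j then nth 0%N s j.-1 else nblocks s.

Definition block_history (par : seq vertex) : seq nat :=
  foldl (fun s v => rcons s (vertex_block s v)) [::] par.

Definition child_of_block (s : seq nat) (c : nat) (v : vertex) : bool :=
  if v is inr j then nth 0%N s j.-1 == c else false.

Definition gport_history (p : nat) (par : seq vertex) : Prop :=
  forall i, (i < size par)%N -> nth (inl 0%N) par i \in vertices p i.

Lemma block_history_rcons par v :
  block_history (rcons par v) =
  rcons (block_history par) (vertex_block (block_history par) v).
Proof. by rewrite /block_history foldl_rcons. Qed.

Lemma size_block_history par : size (block_history par) = size par.
Proof.
by elim/last_ind: par => // par v IH; rewrite block_history_rcons !size_rcons IH.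
Qed.

Lemma take_block_history k par : take k (block_history par) = block_history (take k par).
Proof.
elim/last_ind: par => [|par v IH]; first by case: k.
have [kpar|parK] := leqP k (size par); last first.
  by rewrite !take_oversize ?size_block_history ?size_rcons.
by rewrite block_history_rcons -!cats1 !takel_cat ?size_block_history.
Qed.

Lemma nth_block_history par i : (i < size par)%N ->
  nth 0%N (block_history par) i =
  vertex_block (block_history (take i par)) (nth (inl 0%N) par i).
Proof.
move=> ipar; rewrite -(nth_take 0%N (ltnSn i)) take_block_history.
rewrite (take_nth (inl 0%N) ipar) block_history_rcons nth_rcons.
by rewrite size_block_history size_take ipar ltnn eqxx.
Qed.

Lemma mem_vertices p N v : (v \in vertices p N) =
  match v with inl j => (j <= N %/ p)%N | inr j => (0 < j <= N)%N end.
Proof.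
have inl_inj : injective (@inl nat nat) by move=> ? ? [].
have inr_inj : injective (@inr nat nat) by move=> ? ? [].
rewrite mem_cat; case: v => j.
  rewrite (mem_map inl_inj) mem_iota ltnS orbC; case: mapP => // -[] //.
by rewrite (mem_map inr_inj) mem_iota add1n ltnS; case: mapP => // -[].
Qed.

Lemma uniq_vertices p N : uniq (vertices p N).
Proof.
rewrite cat_uniq !map_inj_uniq ?iota_uniq ?andbT //=; try by move=> ? ? [].
by apply/hasPn => _ /mapP[j _ ->]; rewrite !inE; apply/mapP => -[].
Qed.

Lemma vertices_node_lt p N j : inr j \in vertices p N -> (j.-1 < N)%N.
Proof. by rewrite mem_vertices => /andP[j0 jN]; rewrite (leq_trans _ jN) ?ltn_predL. Qed.

Lemma gport_history_rcons p par v :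
  gport_history p (rcons par v) <-> gport_history p par /\ v \in vertices p (size par).
Proof.
split=> [hpar | [hpar hv] i].
  split=> [i ipar|]; last by have := hpar (size par); rewrite size_rcons nth_rcons ltnn eqxx; apply.
  by have := hpar i; rewrite size_rcons nth_rcons ipar; apply; apply: ltnW.
rewrite size_rcons ltnS leq_eqVlt nth_rcons => /orP[/eqP ->|ipar].
  by rewrite ltnn eqxx.
by rewrite ipar; apply: hpar.
Qed.

Lemma gport_history_take p k par : gport_history p par -> gport_history p (take k par).
Proof.
move=> hpar i; rewrite size_take_min leq_min => /andP[ik ipar].
by rewrite nth_take //; apply: hpar.
Qed.

Lemma gport_history_vertices p par v : gport_history p par ->
  v \in par -> v \in vertices p (size par).
Proof.
move=> hpar /(nthP (inl 0%N)) [i ipar <-]; move: (hpar i ipar).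
rewrite !mem_vertices; case: (nth _ par i) => j.
  by move/leq_trans; apply; apply: leq_div2r; apply: ltnW.
by case/andP=> -> /leq_trans; apply; apply: ltnW.
Qed.

Lemma gport_dist_history (R : realFieldType) (alpha ell : R) p N x :
  x \in gport_dist alpha ell p N -> gport_history p x.2 /\ size x.2 = N.
Proof.
elim: N x => [|N IH] x /=; first by rewrite inE => /eqP -> /=; split=> // i.
move/flatten_mapP => [y /IH[hy sy] /mapP[v hv ->]] /=.
by rewrite size_rcons sy; split=> //; apply/gport_history_rcons; rewrite sy.
Qed.

Lemma nblocks_iota s m : (forall k, (k \in s) = (k < m)%N) -> nblocks s = m.
Proof.
move=> sm; have ps : undup s =i iota 0 m by move=> k; rewrite mem_undup sm mem_iota.
by rewrite /nblocks (perm_size (uniq_perm (undup_uniq s) (iota_uniq 0 m) ps)) size_iota.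
Qed.

Section BlockCounts.
Variable p : nat.

Lemma mem_block_history par : gport_history p par ->
  forall k, (k \in block_history par) = (k < count is_root par)%N.
Proof.
elim/last_ind: par => [|q v IH] // /gport_history_rcons[/IH memq hv] k.
rewrite block_history_rcons mem_rcons in_cons -cats1 count_cat /= memq.
case: v hv => j /= hj; first by rewrite (nblocks_iota memq) addn1 ltnS [in RHS]leq_eqVlt.
rewrite !addn0; case: eqP => [->|//].
by rewrite -memq mem_nth // size_block_history (vertices_node_lt hj).
Qed.

Lemma nblocks_block_history par : gport_history p par ->
  nblocks (block_history par) = count is_root par.
Proof. by move/mem_block_history/nblocks_iota. Qed.

Lemma nth_block_history_lt par j : gport_history p par -> (j < size par)%N ->
  (nth 0%N (block_history par) j < count is_root par)%N.
Proof.
by move=> hpar jpar; rewrite -mem_block_history // mem_nth // size_block_history.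
Qed.

Lemma count_block_history par c : gport_history p par -> (c < count is_root par)%N ->
  count_mem c (block_history par) = (count (child_of_block (block_history par) c) par).+1.
Proof.
elim/last_ind: par => [|q v IH] // hqv; have /gport_history_rcons[hq hv] := hqv.
set s := block_history q.
have child_rcons b : count (child_of_block (rcons s b) c) q = count (child_of_block s c) q.
  apply: eq_in_count => -[] // j /(gport_history_vertices hq)/vertices_node_lt jq /=.
  by rewrite nth_rcons size_block_history jq.
rewrite block_history_rcons -/s -[rcons q v]cats1 !count_cat child_rcons -cats1 count_cat.
case: v hv hqv => j /= hj hqv; last first.
  by rewrite !addn0 => cq; rewrite IH // nth_cat size_block_history (vertices_node_lt hj).
have ms : nblocks s = count is_root q by apply: nblocks_block_history.
rewrite addn1 ltnS leq_eqVlt ms => /orP[/eqP ->|cq]; last by rewrite IH // (gtn_eqF cq).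
have -> : count_mem (count is_root q) s = 0%N.
  by apply/count_memPn; rewrite mem_block_history // ltnn.
rewrite eqxx (eq_in_count (a2 := pred0)) ?count_pred0 // => -[] // i.
by move/(gport_history_vertices hq)/vertices_node_lt => iq /=; rewrite ltn_eqF ?nth_block_history_lt.
Qed.

End BlockCounts.

Lemma count_nth_iota1 (s : seq nat) N c : size s = N ->
  count (fun j => nth 0%N s j.-1 == c) (iota 1%N N) = count_mem c s.
Proof.
by move=> <-; rewrite -(addn0 1%N) iotaDl count_map -{3}(mkseq_nth 0%N s) count_map.
Qed.

Section Transition.
Variables (R : realFieldType) (alpha ell : R) (p : nat).
Hypothesis alpha1 : 1 + alpha != 0.

Local Notation a := (1 / (1 + alpha)).
Local Notation theta := (ell / (1 + alpha)).
Local Notation gport_norm N := ((1 + alpha) * N%:R + ((N %/ p)%N + 1)%:R * ell).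

Lemma div_crp_norm N x :
  x / (N%:R + ((N %/ p)%N + 1)%:R * theta) = (1 + alpha) * x / gport_norm N.
Proof.
have -> : N%:R + ((N %/ p)%N + 1)%:R * theta = gport_norm N / (1 + alpha) by field.
by rewrite invf_div mulrA [x * _]mulrC.
Qed.

Lemma crp_prob_new_block N s :
  crp_prob a theta p N s (nblocks s) =
  ((nblocks s)%:R + ((N %/ p)%N + 1)%:R * ell) / gport_norm N.
Proof. by rewrite /crp_prob /= ltnn div_crp_norm; congr (_ / _); field. Qed.

Lemma crp_prob_old_block N s c k : (c < nblocks s)%N -> count_mem c s = k.+1 ->
  crp_prob a theta p N s c = (k%:R + k.+1%:R * alpha) / gport_norm N.
Proof.
move=> cs sc; rewrite /crp_prob /= cs div_crp_norm sc; congr (_ / _).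
by rewrite -addn1 natrD; field.
Qed.

Lemma sum_gport_prob_block par c : gport_history p par ->
    (c <= nblocks (block_history par))%N ->
  \sum_(v <- vertices p (size par) | vertex_block (block_history par) v == c)
     gport_prob alpha ell p (size par) par v =
  crp_prob a theta p (size par) (block_history par) c.
Proof.
move=> hpar; set s := block_history par.
have ms : nblocks s = count is_root par := nblocks_block_history hpar.
have gp v : gport_prob alpha ell p (size par) par v =
    ((count_mem v par)%:R + (if v is inl _ then ell else alpha)) / gport_norm (size par).
  by case: v.
rewrite (eq_bigr _ (fun v _ => gp v)) -big_distrl big_split /= -natr_sum.
rewrite sum_count_mem ?uniq_vertices // (eq_in_count (a2 := fun v => vertex_block s v == c));
  last by move=> v /(gport_history_vertices hpar) ->; rewrite andbT.
rewrite big_cat !big_map /= !big_const_seq !iter_addr_0 count_nth_iota1 ?size_block_history //.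
rewrite ms leq_eqVlt => /orP[/eqP ->|cm].
  have -> : count (fun v => vertex_block s v == count is_root par) par = count is_root par.
    apply: eq_in_count => -[j _|j /(gport_history_vertices hpar)/vertices_node_lt jpar] /=.
      by rewrite ms eqxx.
    by rewrite ltn_eqF ?(nth_block_history_lt hpar).
  have -> : count_mem (count is_root par) s = 0%N.
    by apply/count_memPn; rewrite (mem_block_history hpar) ltnn.
  rewrite eqxx count_predT /= size_iota -ms crp_prob_new_block.
  by rewrite mulr0n addr0 mulr_natl -addn1.
have -> : count (fun v => vertex_block s v == c) par = count (child_of_block s c) par.
  by apply: eq_count => -[j|j] //=; rewrite ms gtn_eqF.
rewrite (gtn_eqF cm) count_pred0 mulr0n add0r (count_block_history hpar cm).
by rewrite (crp_prob_old_block _ _ (count_block_history hpar cm)) ?ms // -[alpha *+ _]mulr_natl.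
Qed.

Lemma sum_gport_step_block par (g : seq nat -> R) : gport_history p par ->
  \sum_(v <- vertices p (size par))
     gport_prob alpha ell p (size par) par v * g (block_history (rcons par v)) =
  \sum_(c <- iota 0 (nblocks (block_history par)).+1)
     crp_prob a theta p (size par) (block_history par) c * g (rcons (block_history par) c).
Proof.
move=> hpar; set s := block_history par.
rewrite (partition_big_seq (h := vertex_block s) _ _ (iota_uniq 0 (nblocks s).+1)); last first.
  move=> [j _|j /vertices_node_lt jpar]; rewrite mem_iota //= ltnS.
  by rewrite (nblocks_block_history hpar) ltnW ?(nth_block_history_lt hpar).
apply: eq_big_seq => c; rewrite mem_iota ltnS => cs.
rewrite -sum_gport_prob_block // big_distrl /=.
by apply: eq_bigr => v /eqP vc; rewrite block_history_rcons -/s vc.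
Qed.

Hypothesis ell0 : ell != 0.

Lemma sum_gport_dist_block_history n (g : seq nat -> R) :
  \sum_(x <- gport_dist alpha ell p n.+1) x.1 * g (block_history x.2) =
  \sum_(y <- crp_dist a theta p n.+1) y.1 * g y.2.
Proof.
elim: n g => [|n IH] g.
  have -> : gport_dist alpha ell p 1 = [:: (1, [:: inl 0%N])].
    rewrite /= /gport_step /vertices div0n /= mul1r /gport_prob div0n /=.
    by rewrite mulr0 !add0r add0n mul1r divff.
  by rewrite /= !big_seq1.
have -> : gport_dist alpha ell p n.+2 =
  gport_step alpha ell p n.+1 (gport_dist alpha ell p n.+1) by [].
have -> : crp_dist a theta p n.+2 = crp_step a theta p n.+1 (crp_dist a theta p n.+1) by [].
rewrite /gport_step (sum_flatten_step (fun=> vertices p n.+1) (gport_prob alpha ell p n.+1)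
  _ (g \o block_history)).
rewrite /crp_step (sum_flatten_step (fun s => iota 0 (nblocks s).+1) (crp_prob a theta p n.+1)).
rewrite -(IH (fun s => \sum_(c <- iota 0 (nblocks s).+1) crp_prob a theta p n.+1 s c * g (rcons s c))).
apply: eq_big_seq => x /gport_dist_history[hx sx]; congr (_ * _).
by have := sum_gport_step_block g hx; rewrite sx.
Qed.

End Transition.

Section BranchPartition.
Variables (p : nat) (par : seq vertex).
Hypothesis hpar : gport_history p par.

Lemma branch_topP f x : (0 < x <= size par)%N -> (x <= f)%N ->
  [/\ (0 < branch_top f par x <= x)%N,
      is_root (nth (inl 0%N) par (branch_top f par x).-1) &
      nth 0%N (block_history par) x.-1 =
      nth 0%N (block_history par) (branch_top f par x).-1].
Proof.
(* node x is attached to a strictly earlier node, so fuel x suffices *)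
elim: f x => [|f IH] x /andP[x0 xpar] xf; first by move: xf x0; rewrite leqn0 => /eqP ->.
have xpar' : (x.-1 < size par)%N by lia.
rewrite /=; case e: (nth (inl 0%N) par x.-1) => [k|j]; first by rewrite x0 leqnn e.
have := hpar xpar'; rewrite e mem_vertices => /andP[j0 jx].
have jpar : (0 < j <= size par)%N by apply/andP; lia.
have jf : (j <= f)%N by lia.
have [/andP[t0 tj] troot tblock] := IH j jpar jf.
split=> //; first by apply/andP; lia.
rewrite -tblock (nth_block_history xpar') e /= -take_block_history nth_take //; lia.
Qed.

Lemma nth_block_history_root i : (i < size par)%N -> is_root (nth (inl 0%N) par i) ->
  nth 0%N (block_history par) i = count is_root (take i par).
Proof.
move=> ipar; rewrite (nth_block_history ipar); case: (nth _ par i) => //= _ _.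
exact: nblocks_block_history (gport_history_take (k := i) hpar).
Qed.

Lemma block_history_root_inj :
  {in [pred i | (i < size par)%N && is_root (nth (inl 0%N) par i)] &,
    injective (nth 0%N (block_history par))}.
Proof.
have lt_roots i j : (i < j)%N -> (i < size par)%N -> is_root (nth (inl 0%N) par i) ->
    (count is_root (take i par) < count is_root (take j par))%N.
  move=> ij ipar iroot; apply: leq_trans (_ : count is_root (take i.+1 par) <= _)%N.
    by rewrite (take_nth (inl 0%N) ipar) -cats1 count_cat /= iroot addn1.
  by rewrite -[take j par](cat_take_drop i.+1) count_cat take_takel ?leq_addr.
move=> i j /andP[ipar iroot] /andP[jpar jroot].
rewrite !nth_block_history_root //.
case: (ltngtP i j) => // ij e;
  [have := lt_roots _ _ ij ipar iroot | have := lt_roots _ _ ij jpar jroot];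
  by rewrite e ltnn.
Qed.

Lemma crp_key_block_history x y : (x < size par)%N -> (y < size par)%N ->
  (crp_key (block_history par) x.+1 == crp_key (block_history par) y.+1) =
  (gport_key par x.+1 == gport_key par y.+1).
Proof.
move=> xpar ypar; rewrite /crp_key /gport_key.
have [/andP[tx0 txx] txroot ->] := branch_topP (x := x.+1) xpar (leqnn _).
have [/andP[ty0 tyy] tyroot ->] := branch_topP (x := y.+1) ypar (leqnn _).
set tx := branch_top _ _ x.+1 in tx0 txx txroot *.
set ty := branch_top _ _ y.+1 in ty0 tyy tyroot *.
have txpar : (tx.-1 < size par)%N by lia.
have typar : (ty.-1 < size par)%N by lia.
apply/eqP/eqP => [e|->] //; rewrite -(prednK tx0) -(prednK ty0); congr _.+1.
by apply: block_history_root_inj; rewrite ?inE ?txpar ?typar.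
Qed.

End BranchPartition.

Lemma part_of_key_eq k (key1 key2 : nat -> nat) :
  (forall x y : 'I_k, (key1 x.+1 == key1 y.+1) = (key2 x.+1 == key2 y.+1)) ->
  part_of_key k key1 = part_of_key k key2.
Proof.
by move=> eq12; apply: eq_imset => x; apply/setP => y; rewrite !inE eq12.
Qed.

Lemma crp_part_block_history p par k : gport_history p par -> (k <= size par)%N ->
  crp_part k (block_history par) = gport_part k par.
Proof.
move=> hpar kpar; rewrite /crp_part /gport_part take_block_history.
apply: part_of_key_eq => x y.
by rewrite (crp_key_block_history (gport_history_take (k := k) hpar)) ?size_takel.
Qed.

Theorem mainTheorem11 (R : realFieldType) (alpha ell : R) (p : nat)
    (halpha : 0 < alpha) (hell : 0 < ell) (hp : (0 < p)%N) :
  let a := 1 / (1 + alpha) in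
  let theta := ell / (1 + alpha) in
  forall N : nat, (1 <= N)%N ->
    (forall P : {set {set 'I_N}},
        crp_law a theta p N P = gport_law alpha ell p N P) /\
    (forall rho : forall k : 'I_N, {set {set 'I_k.+1}},
        crp_path_law a theta p N rho = gport_path_law alpha ell p N rho).
Proof.
move=> a theta [//|n] _; rewrite /crp_law /gport_law /crp_path_law /gport_path_law /a /theta.
have alpha1 : 1 + alpha != 0 by rewrite lt0r_neq0 // addr_gt0.
have push := sum_gport_dist_block_history p alpha1 (lt0r_neq0 hell) n.
have part k x : (k <= n.+1)%N -> x \in gport_dist alpha ell p n.+1 ->
    crp_part k (block_history x.2) = gport_part k x.2.
  by move=> kn /gport_dist_history[hx sx]; rewrite (crp_part_block_history hx) ?sx.
split=> [P|rho].
  rewrite -(push (fun s => (crp_part n.+1 s == P)%:R)).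
  by apply: eq_big_seq => x hx; rewrite part.
rewrite -(push (fun s => [forall k : 'I_n.+1, crp_part k.+1 s == rho k]%:R)).
apply: eq_big_seq => x hx; congr (_ * (nat_of_bool _)%:R).
by apply: eq_forallb => k; rewrite part.
Qed.
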